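(* Let $g\in W(\mathsf D_n)$, written as a product $g=\beta_1\cdots\beta_R$ of disjoint signed permutation cycles, and let $\Lambda$ be the number of $i$ with $\sigma(\beta_i)=-1$. Let $\langle g\rangle$ act on $\mathrm{Pic}(\bar X)=\bigoplus_{i=-1}^n\mathbb Z l_i$ via $\Phi$. Then $$\mathrm H^1(\langle g\rangle,\mathrm{Pic}(\bar X))=\begin{cases}0,&\Lambda=0\text{ or }\Lambda=2,\\ (\mathbb Z/2)^{\Lambda-2},&\text{otherwise.}\end{cases}$$
   Context: $W(\mathsf B_n)$ is the group of signed permutations of the symbols $j^\pm$ ($j=1,\dots,n$), generated by $\mathfrak S_n$ and involutions $c_j$ exchanging $j^+,j^-$; each element is $c_{j_1}\cdots c_{j_t}\tau$ with distinct $j_i$, $\tau\in\mathfrak S_n$; $\sigma(c_{j_1}\cdots c_{j_t}\tau)=(-1)^t$, $W(\mathsf D_n)=\ker\sigma$. Decomposing $\tau$ into disjoint cycles $\gamma$ (including fixed points), the signed permutation cycles of $g$ are $\beta_\gamma=(\prod_{j_i\in\mathrm{supp}\,\gamma}c_{j_i})\gamma$, and $\sigma(\beta_\gamma)=(-1)^{\#\{j_i\in\mathrm{supp}\,\gamma\}}$. $\mathrm{Pic}(\bar X)$ is the geometric Picard lattice of a standard conic bundle over $\mathbb P^1$ with $n$ degenerate fibers, with basis $l_{-1},l_0,l_1,\dots,l_n$ ($l_0$ the fiber class, $l_j$ a component of the $j$-th degenerate fiber). For $g=c_{j_1}\cdots c_{j_t}\tau$ with $t$ even, let $s(i)=-1$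 if $i\in\{j_1,\dots,j_t\}$, else $1$; then $\Phi(g)l_0=l_0$, $\Phi(g)l_{-1}=l_{-1}+\frac t2l_0-\sum_{s(i)=-1}l_i$, and for $v\ge1$, $u=\tau^{-1}(v)$: $\Phi(g)l_v=l_u$ if $s(u)=1$, $\Phi(g)l_v=l_0-l_u$ if $s(u)=-1$. *)

From HB Require Import structures.
From mathcomp Require Import all_boot all_order all_algebra all_fingroup.
Set Implicit Arguments. Unset Strict Implicit. Unset Printing Implicit Defensive.
Import GRing.Theory.
Local Open Scope ring_scope.

(* An element g = c_{j_1}...c_{j_t} tau of W(B_n) is encoded by the set
   J = {j_1,...,j_t} : {set 'I_n} of sign-flipped symbols and tau : 'S_n
   (symbols 1..n are the ordinals 0..n-1).  g is in W(D_n) iff #|J| is even.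

   Pic(X) = Z^{n+2} with basis indexed by 'I_(n.+2) = 'I_(2+n):
     index 0 <-> l_{-1},  index 1 <-> l_0,  index 2+j <-> l_{j+1} (j : 'I_n).
   Phi_mat J tau is the matrix of Phi(g) acting on column vectors:
   its column v is Phi(g) applied to the basis vector v. *)
Definition Phi_mat (n : nat) (J : {set 'I_n}) (tau : 'S_n) : 'M[int]_(n.+2) :=
  \matrix_(i < n.+2, v < n.+2)
   match @split 2 n v with
   | inl a =>
       if a == (ord0 : 'I_2) then
         (* Phi(g) l_{-1} = l_{-1} + t/2 l_0 - sum_{j in J} l_j *)
         match @split 2 n i with
         | inl b => if b == (ord0 : 'I_2) then 1 else ((#|J| %/ 2)%N)%:Z
         | inr j => if j \in J then -1 else 0
         end
       else
         (* Phi(g) l_0 = l_0 *)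
         match @split 2 n i with
         | inl b => if b == (ord0 : 'I_2) then 0 else 1
         | inr _ => 0
         end
   | inr w =>
       (* Phi(g) l_w = l_u if u not in J, l_0 - l_u if u in J, u = tau^-1 w *)
       let u := ((tau^-1)%g w) in
       match @split 2 n i with
       | inl b => if b == (ord0 : 'I_2) then 0 else (if u \in J then 1 else 0)
       | inr j => if j == u then (if u \in J then -1 else 1) else 0
       end
   end.

(* Crossed homomorphisms (1-cocycles) of the cyclic group <P> = {P^a | a : nat}
   (a finite group, P having finite order) acting on M = Z^{n+2} through matrices. *)
Definition cocycle (n : nat) (P : 'M[int]_(n.+2))
  (f : 'M[int]_(n.+2) -> 'cV[int]_(n.+2)) : Prop :=
  forall a b : nat, f (P ^+ a *m P ^+ b) = f (P ^+ a) + P ^+ a *m f (P ^+ b).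

Definition coboundary (n : nat) (P : 'M[int]_(n.+2))
  (f : 'M[int]_(n.+2) -> 'cV[int]_(n.+2)) : Prop :=
  exists m : 'cV[int]_(n.+2), forall a : nat, f (P ^+ a) = P ^+ a *m m - m.

(* H^1(<P>, Z^{n+2}) = cocycles / coboundaries is isomorphic to (Z/2)^k:
   there is a group morphism from the cocycles onto (F_2)^k whose kernel is
   exactly the coboundaries. *)
Definition H1_iso_F2pow (n : nat) (P : 'M[int]_(n.+2)) (k : nat) : Prop :=
  exists phi : ('M[int]_(n.+2) -> 'cV[int]_(n.+2)) -> 'rV['F_2]_k,
  [/\ forall f1 f2, cocycle P f1 -> cocycle P f2 ->
        phi (fun A => f1 A + f2 A) = phi f1 + phi f2,
      forall v, exists2 f, cocycle P f & phi f = v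
    & forall f, cocycle P f -> (phi f = 0 <-> coboundary P f)].

(* Lambda = number of signed cycles beta_gamma (gamma a cycle of tau, fixed
   points included) with sigma(beta_gamma) = -1, i.e. #|J :&: supp gamma| odd. *)
Definition Lambda (n : nat) (J : {set 'I_n}) (tau : 'S_n) : nat :=
  #|[set c in porbits tau | odd #|J :&: c|]|.

From HB Require Import structures.
From mathcomp Require Import all_boot all_order all_algebra all_fingroup.
From mathcomp Require Import zify ring.

(* Phi(g) fixes the l_{-1}-coordinate, preserves the form 2 y_0 + sum_u y_u
   (as #J is even) and acts on the l_u-coordinates as the signed permutation g,
   corrected by a multiple of the l_{-1}-coordinate; in particular
   Phi(g)^(2 ord tau) = 1.  For a cyclic group, H^1 = ker N / im (Phi(g) - 1)
   where N is the norm.  A vector x in ker N has zero l_{-1}-coordinate, zero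
   form, and vanishing twisted sums along the cycles beta with sigma(beta) = 1;
   solving x = Phi(g) y - y cycle by cycle shows that such an x is a coboundary
   iff the residues mod 2 of its coordinate sums along the Lambda cycles with
   sigma(beta) = -1 all agree.  These residues always sum to 0 and every such
   residue vector occurs, so H^1 is {c in F_2^Lambda | sum c = 0} modulo the
   constants, i.e. F_2^(Lambda - 2); Lambda is even because #J is. *)

Set Implicit Arguments. Unset Strict Implicit. Unset Printing Implicit Defensive.
Import GRing.Theory Num.Theory.
Local Open Scope ring_scope.

Lemma pchar_F2 : 2%N \in [pchar 'F_2]. Proof. exact: pchar_Fp. Qed.

Lemma natr_F2 m : (m%:R : 'F_2) = (odd m)%:R.
Proof. by rewrite -Fp_nat_mod // modn2. Qed.

Lemma F2_nat_eq (b : 'F_2) : b = (b != 0)%:R.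
Proof. by case: b => -[|[|//]] i; apply/val_inj. Qed.

Lemma intr2_F2 : (2%:~R : 'F_2) = 0. Proof. by apply/eqP. Qed.

Lemma sum_pred1_natr (T : finType) (R : pzSemiRingType) (A : {pred T}) r :
  \sum_(v in A) ((v == r)%:R : R) = (r \in A)%:R.
Proof.
have [r_A|r_nA] := boolP (r \in A).
  by rewrite (bigD1 r) //= eqxx big1 ?addr0 // => v /andP[_ /negPf->].
by rewrite big1 // => v v_A; case: eqP => // v_r; rewrite -v_r v_A in r_nA.
Qed.

Lemma F2_const_of_sum0 (L : nat) (c : nat -> 'F_2) :
  ~~ odd L -> \sum_(j < L) c j = 0 -> (forall j, (j < L - 2)%N -> c j = c L.-1) ->
  forall j, (j < L)%N -> c j = c L.-1.
Proof.
case: L => [//|[//|l]]; rewrite !oddS negbK !subSS subn0 [_.-1]/= => even_l sum0 c_eq j lt_j.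
have c_l : c l = c l.+1.
  move: sum0; rewrite !big_ord_recr /= (eq_bigr (fun _ => c l.+1)) => [|i _]; last exact: c_eq.
  rewrite sumr_const card_ord -mulr_natr natr_F2 (negPf even_l) mulr0 add0r.
  by move/eqP; rewrite addr_eq0 oppr_pchar2 ?pchar_F2 // => /eqP.
have [/c_eq //|lt_lj|-> //] := ltngtP j l.
by have -> : j = l.+1 by lia.
Qed.

Lemma card_setI_sum (T : finType) (A B : {set T}) : #|A :&: B| = (\sum_(i in B) (i \in A))%N.
Proof.
rewrite -sum1_card big_mkcond [RHS]big_mkcond; apply: eq_bigr => i _.
by rewrite inE andbC; case: (i \in B).
Qed.

Lemma odd_sumn (I : finType) (A : {set I}) (f : I -> nat) :
  odd (\sum_(i in A) f i) = odd #|[set i in A | odd (f i)]|.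
Proof.
have -> : #|[set i in A | odd (f i)]| = (\sum_(i in A) odd (f i))%N.
  rewrite -sum1_card big_mkcond [RHS]big_mkcond; apply: eq_bigr => i _.
  by rewrite inE; case: (i \in A).
apply: (big_ind2 (fun a b => odd a = odd b)) => // [a1 a2 b1 b2 e1 e2|i _].
  by rewrite !oddD e1 e2.
by rewrite oddb.
Qed.

Lemma mxBE (R : zmodType) m p (A B : 'M[R]_(m, p)) i j : (A - B) i j = A i j - B i j.
Proof. by rewrite !mxE. Qed.

Section CyclicCohomology.
Variables (n : nat) (Q : 'M[int]_(n.+2)).

Definition normmx a : 'M[int]_(n.+2) := \sum_(i < a) Q ^+ i.

Lemma normmx0 : normmx 0 = 0. Proof. exact: big_ord0. Qed.

Lemma normmxS a : normmx a.+1 = 1 + Q *m normmx a.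
Proof.
rewrite /normmx big_ord_recl expr0 mulmx_sumr; congr (_ + _).
by apply: eq_bigr => i _; rewrite exprS.
Qed.

Lemma normmxSr a : normmx a.+1 = normmx a + Q ^+ a.
Proof. by rewrite /normmx big_ord_recr. Qed.

Lemma normmxD a b : normmx (a + b) = normmx a + Q ^+ a *m normmx b.
Proof.
rewrite /normmx big_split_ord mulmx_sumr; congr (_ + _).
by apply: eq_bigr => i _; rewrite exprD.
Qed.

Lemma normmx_subr1 a : normmx a *m (Q - 1) = Q ^+ a - 1.
Proof.
elim: a => [|a IH]; first by rewrite normmx0 mul0mx expr0 subrr.
by rewrite normmxSr mulmxDl IH mulmxBr mulmx1 addrC addrA subrK exprSr.
Qed.

Lemma normmxC a b : normmx a *m normmx b = normmx b *m normmx a.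
Proof.
rewrite /normmx mulmx_suml; under eq_bigr do rewrite mulmx_sumr.
rewrite exchange_big mulmx_suml; apply: eq_bigr => j _; rewrite mulmx_sumr.
by apply: eq_bigr => i _; rewrite !mulmxE -!exprD addnC.
Qed.

Lemma normmx_fixed a (z : 'cV[int]_(n.+2)) : Q *m z = z -> normmx a *m z = z *+ a.
Proof.
move=> Qz; have QXz i : Q ^+ i *m z = z.
  by elim: i => [|i IH]; rewrite ?expr0 ?mul1mx // exprSr -mulmxE -mulmxA Qz.
by rewrite /normmx mulmx_suml (eq_bigr _ (fun (i : 'I_a) _ => QXz i)) sumr_const card_ord.
Qed.

Lemma cocycle1 f : cocycle Q f -> f 1 = 0.
Proof.
move=> cf; have := cf 0%N 0%N; rewrite expr0 mulmx1 mul1mx.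
by move/(congr1 (fun v => v - f 1)); rewrite subrr addrK.
Qed.

Lemma cocycle_pow f a : cocycle Q f -> f (Q ^+ a) = normmx a *m f Q.
Proof.
move=> cf; elim: a => [|a IH]; first by rewrite normmx0 mul0mx expr0 cocycle1.
have -> : Q ^+ a.+1 = Q ^+ 1 *m Q ^+ a by rewrite expr1 exprS.
by rewrite cf expr1 IH normmxS mulmxDl mul1mx mulmxA.
Qed.

Lemma coboundaryP f :
  cocycle Q f -> coboundary Q f <-> exists y, f Q = Q *m y - y.
Proof.
move=> cf; split=> [[y fy]|[y fy]]; first by exists y; rewrite -[Q]expr1 fy.
exists y => a; rewrite cocycle_pow // fy.
have -> : Q *m y - y = (Q - 1) *m y by rewrite mulmxBl mul1mx.
by rewrite mulmxA normmx_subr1 mulmxBl mul1mx.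
Qed.

Variables (m : nat) (m_gt0 : (0 < m)%N) (Qm : Q ^+ m = 1).

Lemma cocycle_norm f : cocycle Q f -> normmx m *m f Q = 0.
Proof. by move=> cf; rewrite -cocycle_pow // Qm cocycle1. Qed.

(* The difference of the two sides is Q-fixed and killed by the norm, which
   multiplies Q-fixed vectors by m. *)
Lemma normmx_pow_eq (x : 'cV[int]_(n.+2)) a b :
  normmx m *m x = 0 -> Q ^+ a = Q ^+ b -> normmx a *m x = normmx b *m x.
Proof.
move=> Nx Qab; apply/eqP; rewrite -subr_eq0 -mulmxBl.
set z := (normmx a - normmx b) *m x.
have QN c : Q *m normmx c = normmx c + (Q ^+ c - 1).
  by rewrite addrA -normmxSr normmxS addrC addKr.
have Qz : Q *m z = z.
  by rewrite mulmxA mulmxBr !QN Qab opprD addrACA subrr addr0.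
have : normmx m *m z = 0 by rewrite mulmxA mulmxBr !(normmxC m) -mulmxBl -mulmxA Nx mulmx0.
rewrite normmx_fixed // => /eqP; rewrite -scaler_nat scalemx_eq0 pnatr_eq0.
by rewrite eqn0Ngt m_gt0.
Qed.

Lemma cocycle_of_norm0 (x : 'cV[int]_(n.+2)) :
  normmx m *m x = 0 -> exists2 f, cocycle Q f & f Q = x.
Proof.
move=> Nx.
pose f A := if [pick a : 'I_m | A == Q ^+ a] is Some a then normmx a *m x else 0.
have fQ b : f (Q ^+ b) = normmx b *m x.
  rewrite /f; case: pickP => [a /eqP Qba|]; first exact: normmx_pow_eq.
  move/(_ (Ordinal (ltn_pmod b m_gt0))); rewrite /= {1}(divn_eq b m).
  by rewrite exprD mulnC exprM Qm expr1n mul1r eqxx.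
exists f => [a b|]; last by rewrite -[Q]expr1 fQ normmxS normmx0 mulmx0 addr0 mul1mx.
have -> : Q ^+ a *m Q ^+ b = Q ^+ (a + b) by rewrite exprD.
by rewrite !fQ mulmxA -mulmxDl -normmxD.
Qed.

Lemma norm0_of_scaled_coboundary (c : int) (x y : 'cV[int]_(n.+2)) :
  c != 0 -> c *: x = Q *m y - y -> normmx m *m x = 0.
Proof.
move=> c_neq0 cx; apply/eqP.
have : c *: (normmx m *m x) == 0.
  rewrite scalemxAr cx; have -> : Q *m y - y = (Q - 1) *m y by rewrite mulmxBl mul1mx.
  by rewrite mulmxA normmx_subr1 Qm subrr mul0mx.
by rewrite scalemx_eq0 (negPf c_neq0).
Qed.

Lemma H1_iso_F2pow_cyclic k (psi : 'cV[int]_(n.+2) -> 'rV['F_2]_k) :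
  {morph psi : x y / x + y} ->
  (forall w, exists2 x, normmx m *m x = 0 & psi x = w) ->
  (forall x, normmx m *m x = 0 -> psi x = 0 <-> exists y, x = Q *m y - y) ->
  H1_iso_F2pow Q k.
Proof.
move=> psiD psi_onto psi_ker; exists (fun f => psi (f Q)); split.
- by move=> f1 f2 _ _; rewrite psiD.
- move=> w; have [x Nx <-] := psi_onto w.
  by have [f cf <-] := cocycle_of_norm0 Nx; exists f.
- by move=> f cf; rewrite coboundaryP // psi_ker // cocycle_norm.
Qed.
End CyclicCohomology.

Section TwistedCycles.
Variables (T : finType) (s : {perm T}) (J : {set T}).

Lemma big_traject (R : Type) (idx : R) (op : R -> R -> R) (F : T -> R) k u :
  \big[op/idx]_(v <- traject s u k) F v = \big[op/idx]_(i < k) F (iter i s u).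
Proof.
elim: k u => [|k IH] u; first by rewrite big_nil big_ord0.
rewrite big_cons big_ord_recl IH; congr (op _ _).
by apply: eq_bigr => i _; rewrite -iterSr.
Qed.

Lemma big_porbit (R : Type) (idx : R) (op : Monoid.com_law idx) (F : T -> R) u :
  \big[op/idx]_(v in porbit s u) F v = \big[op/idx]_(i < #|porbit s u|) F (iter i s u).
Proof.
rewrite -big_traject big_uniq ?uniq_traject_porbit //.
by apply: eq_bigl => v; rewrite porbit_traject.
Qed.

Lemma big_porbits (R : Type) (idx : R) (op : Monoid.com_law idx) (F : T -> R) :
  \big[op/idx]_u F u = \big[op/idx]_(C in porbits s) \big[op/idx]_(v in C) F v.
Proof.
rewrite (partition_big_imset (porbit s)); apply: eq_bigr => C /imsetP[u _ ->].
by apply: eq_bigl => v; rewrite eq_porbit_mem.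
Qed.

Lemma porbitS u : porbit s (s u) = porbit s u.
Proof. by have := porbit_perm s 1 u; rewrite expg1. Qed.

Lemma porbit_fconnect u : porbit s u =i fconnect s u.
Proof.
move=> v; apply/porbitP/idP => [[i ->]|/iter_findex <-].
  by rewrite permX; apply: fconnect_iter.
by exists (findex s u v); rewrite permX.
Qed.

Lemma card_porbitE u : #|porbit s u| = fingraph.order s u.
Proof. exact: eq_card (porbit_fconnect u). Qed.

Lemma big_porbit_perm (R : Type) (idx : R) (op : Monoid.com_law idx) (F : T -> R) u :
  \big[op/idx]_(v in porbit s u) F (s v) = \big[op/idx]_(v in porbit s u) F v.
Proof.
rewrite [RHS](reindex_inj (@perm_inj _ s)); apply: eq_bigl => v.
by rewrite -!eq_porbit_mem porbitS.
Qed.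

Lemma iter_order_perm u : iter #[s]%g s u = u.
Proof. by rewrite -permX expg_order perm1. Qed.

(* For the signed permutation (T z) u := (-1)^[u \in J] * z (s u), we have
   (T^a z) u = twist a u * z (s^a u) and tsum z a u = (\sum_(i < a) T^i z) u. *)
Definition flips a u := (\sum_(i < a) (iter i s u \in J))%N.

Definition twist a u : int := (-1) ^+ odd (flips a u).

Definition tsum (z : T -> int) a u : int := \sum_(i < a) twist i u * z (iter i s u).

Lemma flipsS a u : flips a.+1 u = ((u \in J) + flips a (s u))%N.
Proof.
by rewrite /flips big_ord_recl; under [in RHS]eq_bigr do rewrite -iterSr.
Qed.

Lemma flipsD a b u : flips (a + b) u = (flips a u + flips b (iter a s u))%N.
Proof.
elim: a u => [|a IH] u; first by rewrite /flips big_ord0.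
by rewrite addSn !flipsS IH addnA iterSr.
Qed.

Lemma flips_double_order u : ~~ odd (flips (#[s]%g).*2 u).
Proof. by rewrite -addnn flipsD iter_order_perm oddD addbb. Qed.

Lemma flips_porbit u : flips #|porbit s u| u = #|J :&: porbit s u|.
Proof.
by rewrite /flips -(big_porbit addn (fun v => (v \in J) : nat)) card_setI_sum.
Qed.

Lemma twist0 u : twist 0 u = 1. Proof. by rewrite /twist /flips big_ord0. Qed.

Lemma twistS a u : twist a.+1 u = (-1) ^+ (u \in J) * twist a (s u).
Proof. by rewrite /twist flipsS oddD oddb signr_addb. Qed.

Lemma twist_porbit u : twist #|porbit s u| u = (-1) ^+ odd #|J :&: porbit s u|.
Proof. by rewrite /twist flips_porbit. Qed.

Lemma tsum0 z u : tsum z 0 u = 0. Proof. exact: big_ord0. Qed.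

Lemma tsumS z a u : tsum z a.+1 u = z u + (-1) ^+ (u \in J) * tsum z a (s u).
Proof.
rewrite /tsum big_ord_recl twist0 mul1r mulr_sumr; congr (_ + _).
by apply: eq_bigr => i _; rewrite /= twistS -iterSr mulrA.
Qed.

Lemma tsumD z a b u : tsum z (a + b) u = tsum z a u + twist a u * tsum z b (iter a s u).
Proof.
elim: a u => [|a IH] u; first by rewrite tsum0 twist0 add0r mul1r.
by rewrite addSn !tsumS IH twistS iterSr mulrDr addrA mulrA.
Qed.

Lemma tsum_periodic z k q u :
  iter k s u = u -> ~~ odd (flips k u) -> tsum z (k * q) u = tsum z k u *+ q.
Proof.
move=> sku even_k; elim: q => [|q IH]; first by rewrite muln0 tsum0.
by rewrite mulnS tsumD /twist (negPf even_k) mul1r sku IH mulrS.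
Qed.

Lemma tsum_shift z (b : int) a u :
  tsum (fun v => z v + b * (v \in J)%:Z) a u = tsum z a u + b * (odd (flips a u))%:Z.
Proof.
elim: a u => [|a IH] u; first by rewrite !tsum0 /flips big_ord0 mulr0 addr0.
rewrite !tsumS IH flipsS oddD.
by case: (u \in J); case: (odd (flips a (s u))); rewrite /=; ring.
Qed.

Lemma tsum_F2 z u :
  (tsum z #|porbit s u| u)%:~R = \sum_(v in porbit s u) (z v)%:~R :> 'F_2.
Proof.
rewrite big_porbit rmorph_sum; apply: eq_bigr => i _.
by rewrite rmorphM rmorph_sign oppr_pchar2 ?pchar_F2 // expr1n mul1r.
Qed.

Lemma twisted_coboundary (x : T -> int) :
  (forall u, ~~ odd #|J :&: porbit s u| -> tsum x #|porbit s u| u = 0) ->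
  (forall u, odd #|J :&: porbit s u| -> (2 %| tsum x #|porbit s u| u)%Z) ->
  exists y : T -> int, forall u, y u = (-1) ^+ (u \in J) * y (s u) - x u.
Proof.
(* Fix y at the root of each cycle (0, resp. minus half the twisted cycle sum,
   when the cycle has an even, resp. odd, number of flips) and propagate. *)
move=> x_even x_odd; have s_inj : injective s := @perm_inj _ s.
pose Y w := if odd #|J :&: porbit s w| then - (tsum x #|porbit s w| w %/ 2)%Z else 0.
pose d u := findex s u (froot s u).
exists (fun u => - tsum x (d u) u + twist (d u) u * Y (froot s u)) => u.
have root_s : froot s (s u) = froot s u.
  by apply/(fingraph.rootP (fconnect_sym s_inj)); rewrite fconnect_sym // fconnect1.
rewrite /d root_s; case: (eqVneq (froot s u) u) => [ru|u_nroot]; last first.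
  by rewrite (fconnect_findex (connect_root _ u) u_nroot) tsumS twistS; ring.
rewrite ru findex0 tsum0 twist0 oppr0 add0r mul1r.
have k_gt0 : (0 < #|porbit s u|)%N by rewrite lt0n card_porbit_neq0.
have d_su : findex s (s u) u = #|porbit s u|.-1.
  have {2}<- : iter #|porbit s u|.-1 s (s u) = u by rewrite -iterSr prednK ?iter_porbit.
  by rewrite findex_iter // -card_porbitE porbitS prednK.
rewrite d_su; have -> : forall Yu, (-1) ^+ (u \in J) * (- tsum x #|porbit s u|.-1 (s u)
    + twist #|porbit s u|.-1 (s u) * Yu) - x u
    = - tsum x #|porbit s u| u + twist #|porbit s u| u * Yu.
  by move=> Yu; rewrite -{3 4}(prednK k_gt0) tsumS twistS; ring.
rewrite twist_porbit /Y; case: ifP => [odd_u|even_u]; last by rewrite x_even ?even_u.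
have := divzK (x_odd u odd_u); rewrite expr1.
by move: (tsum _ _ _) => t; lia.
Qed.
End TwistedCycles.

Section PhiMatrix.
Variables (n : nat) (J : {set 'I_n}) (tau : 'S_n).
Local Notation P := (Phi_mat J tau).

Definition idx_m1 : 'I_(n.+2) := lshift n (ord0 : 'I_2).
Definition idx_0 : 'I_(n.+2) := lshift n (ord_max : 'I_2).
Definition idx_l (u : 'I_n) : 'I_(n.+2) := rshift 2 u.

Lemma split_m1 : @split 2 n idx_m1 = inl ord0. Proof. exact: (unsplitK (inl _)). Qed.
Lemma split_0 : @split 2 n idx_0 = inl ord_max. Proof. exact: (unsplitK (inl _)). Qed.
Lemma split_l u : @split 2 n (idx_l u) = inr u. Proof. exact: (unsplitK (inr _)). Qed.

Lemma idx_l_inj : injective idx_l. Proof. exact: (@rshift_inj 2 n). Qed.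

Lemma sum_idx (V : zmodType) (F : 'I_(n.+2) -> V) :
  \sum_i F i = F idx_m1 + F idx_0 + \sum_u F (idx_l u).
Proof.
rewrite 2!big_ord_recl addrA; congr (F _ + F _ + _); try exact: val_inj.
by apply: eq_bigr => u _; congr F; apply: val_inj.
Qed.

(* Replaces the l_0-coordinate throughout: unlike it, this form is Phi(g)-invariant. *)
Definition invform p (y : 'M[int]_(n.+2, p)) j := 2 * y idx_0 j + \sum_u y (idx_l u) j.

Lemma Pic_mx_ext p (y1 y2 : 'M[int]_(n.+2, p)) :
  (forall j, y1 idx_m1 j = y2 idx_m1 j) ->
  (forall u j, y1 (idx_l u) j = y2 (idx_l u) j) ->
  (forall j, invform y1 j = invform y2 j) -> y1 = y2.
Proof.
move=> e_m1 e_l e_inv; apply/matrixP => i j.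
case: (splitP (i : 'I_(2 + n))) => [[[|[|//]] lt_a2] /= i_a|u i_u].
- by rewrite (_ : i = idx_m1) ?e_m1 //; apply: val_inj.
- have e_sum : \sum_u y1 (idx_l u) j = \sum_u y2 (idx_l u) j.
    by apply: eq_bigr => u _; apply: e_l.
  move: (e_inv j); rewrite /invform e_sum (_ : i = idx_0); last exact: val_inj.
  by move/addIr; lia.
- by rewrite (_ : i = idx_l u) ?e_l //; apply: val_inj.
Qed.

Lemma ord_max_neq0 : (ord_max == ord0 :> 'I_2) = false. Proof. by []. Qed.

Lemma mulPmx_m1 p (y : 'M[int]_(n.+2, p)) j : (P *m y) idx_m1 j = y idx_m1 j.
Proof.
rewrite mxE sum_idx !mxE split_m1 split_0 ord_max_neq0 eqxx mul1r mul0r addr0.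
by rewrite big1 ?addr0 // => u _; rewrite mxE split_l split_m1 eqxx mul0r.
Qed.

Lemma mulPmx_l p (y : 'M[int]_(n.+2, p)) u j :
  (P *m y) (idx_l u) j = (-1) ^+ (u \in J) * y (idx_l (tau u)) j - (u \in J)%:Z * y idx_m1 j.
Proof.
rewrite mxE sum_idx !mxE split_m1 split_0 split_l ord_max_neq0 eqxx mul0r addr0.
rewrite (bigD1 (tau u)) //= big1 ?addr0 => [|w w_neq]; last first.
  rewrite mxE !split_l /=; case: ifP => [/eqP u_w|_]; last by rewrite mul0r.
  by move: w_neq; rewrite u_w permKV eqxx.
rewrite mxE !split_l /= permK eqxx.
by case: (u \in J); rewrite /= ?expr1 ?expr0; ring.
Qed.

Lemma mulPmx_0 p (y : 'M[int]_(n.+2, p)) j :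
  (P *m y) idx_0 j = (#|J| %/ 2)%N%:Z * y idx_m1 j + y idx_0 j
                     + \sum_u ((tau^-1)%g u \in J)%:Z * y (idx_l u) j.
Proof.
rewrite mxE sum_idx !mxE split_m1 split_0 ord_max_neq0 eqxx mul1r.
congr (_ + _); apply: eq_bigr => u _.
by rewrite mxE split_l split_0 /=; case: (_ \in J).
Qed.

Hypothesis J_even : ~~ odd #|J|.

Lemma invform_mulPmx p (y : 'M[int]_(n.+2, p)) j : invform (P *m y) j = invform y j.
Proof.
have card_J : 2 * (#|J| %/ 2)%N%:Z = \sum_u (u \in J)%:Z.
  rewrite -natz -natrM mulnC divnK ?dvdn2 // -sum1_card big_mkcond natr_sum.
  by apply: eq_bigr => u _; case: (u \in J).
have sum_tau (F : 'I_n -> int) : \sum_u F u = \sum_u F (tau u).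
  exact: (reindex_inj (@perm_inj _ tau)).
have sum_Jtau : \sum_u ((tau^-1)%g u \in J)%:Z * y (idx_l u) j
    = \sum_u (u \in J)%:Z * y (idx_l (tau u)) j.
  by rewrite sum_tau; apply: eq_bigr => u _; rewrite permK.
rewrite /invform mulPmx_0 (eq_bigr _ (fun u _ => mulPmx_l y u j)) sum_Jtau.
rewrite [\sum_u y (idx_l u) j]sum_tau.
have -> : \sum_u ((-1) ^+ (u \in J) * y (idx_l (tau u)) j - (u \in J)%:Z * y idx_m1 j)
    = \sum_u y (idx_l (tau u)) j - 2 * \sum_u ((u \in J)%:Z * y (idx_l (tau u)) j)
      - \sum_u (u \in J)%:Z * y idx_m1 j.
  rewrite mulr_sumr -!sumrB; apply: eq_bigr => u _.
  by case: (u \in J); rewrite /= ?expr1 ?expr0; ring.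
rewrite -mulr_suml -card_J; ring.
Qed.
Local Notation twist := (twist tau J).
Local Notation flips := (flips tau J).

Lemma mulPXmx_m1 a p (y : 'M[int]_(n.+2, p)) j : (P ^+ a *m y) idx_m1 j = y idx_m1 j.
Proof.
elim: a => [|a IH]; first by rewrite expr0 mul1mx.
by rewrite exprS -mulmxA mulPmx_m1.
Qed.

Lemma invform_mulPXmx a p (y : 'M[int]_(n.+2, p)) j : invform (P ^+ a *m y) j = invform y j.
Proof.
elim: a => [|a IH]; first by rewrite expr0 mul1mx.
by rewrite exprS -mulmxA invform_mulPmx.
Qed.

Lemma mulPXmx_l a p (y : 'M[int]_(n.+2, p)) u j :
  (P ^+ a *m y) (idx_l u) j
  = twist a u * y (idx_l (iter a tau u)) j - (odd (flips a u))%:Z * y idx_m1 j.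
Proof.
elim: a u => [|a IH] u; first by rewrite expr0 mul1mx twist0 /flips big_ord0 mul1r mul0r subr0.
rewrite exprS -mulmxA mulPmx_l IH mulPXmx_m1 twistS flipsS oddD iterSr.
by case: (u \in J); case: (odd _); rewrite /= ?expr1 ?expr0; ring.
Qed.

Lemma Phi_order : P ^+ (#[tau]%g).*2 = 1.
Proof.
rewrite -[LHS]mulmx1; apply: Pic_mx_ext => [j|u j|j].
- exact: mulPXmx_m1.
- rewrite mulPXmx_l /twist (negPf (flips_double_order _ _ u)) -addnn iterD.
  by rewrite !iter_order_perm mul1r mul0r subr0.
- exact: invform_mulPXmx.
Qed.
End PhiMatrix.
Arguments idx_m1 {n}.
Arguments idx_0 {n}.

Section PhiCohomology.
Variables (n : nat) (J : {set 'I_n}) (tau : 'S_n).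
Hypothesis J_even : ~~ odd #|J|.
Local Notation P := (Phi_mat J tau).
Local Notation m := (#[tau]%g).*2.
Local Notation N := (normmx P m).
Local Notation tsum := (tsum tau J).

Definition lcoord (x : 'cV[int]_(n.+2)) v := x (idx_l v) 0.

Lemma double_order_gt0 : (0 < m)%N. Proof. by rewrite double_gt0 order_gt0. Qed.

Lemma invformB p (y1 y2 : 'M[int]_(n.+2, p)) j :
  invform (y1 - y2) j = invform y1 j - invform y2 j.
Proof.
rewrite /invform mxBE (eq_bigr _ (fun u _ => mxBE y1 y2 (idx_l u) j)) sumrB.
by rewrite mulrBr opprD addrACA.
Qed.

Lemma invform_sum a p (F : 'I_a -> 'M[int]_(n.+2, p)) j :
  invform (\sum_(i < a) F i) j = \sum_(i < a) invform (F i) j.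
Proof.
rewrite /invform big_split /= -mulr_sumr summxE; congr (_ + _).
rewrite exchange_big; apply: eq_bigr => u _; exact: summxE.
Qed.

Lemma normmx_Phi_m1 a (x : 'cV[int]_(n.+2)) : (normmx P a *m x) idx_m1 0 = x idx_m1 0 *+ a.
Proof.
rewrite mulmx_suml summxE (eq_bigr _ (fun (i : 'I_a) _ => mulPXmx_m1 J tau i x 0)).
by rewrite sumr_const card_ord.
Qed.

Lemma invform_normmx_Phi a (x : 'cV[int]_(n.+2)) :
  invform (normmx P a *m x) 0 = invform x 0 *+ a.
Proof.
rewrite mulmx_suml invform_sum.
rewrite (eq_bigr _ (fun (i : 'I_a) _ => invform_mulPXmx tau J_even i x 0)).
by rewrite sumr_const card_ord.
Qed.

Lemma normmx_Phi_l a (x : 'cV[int]_(n.+2)) u :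
  x idx_m1 0 = 0 -> (normmx P a *m x) (idx_l u) 0 = tsum (lcoord x) a u.
Proof.
move=> x_m1; rewrite mulmx_suml summxE; apply: eq_bigr => i _.
by rewrite mulPXmx_l x_m1 mulr0 subr0.
Qed.

Lemma norm0_coords (x : 'cV[int]_(n.+2)) : N *m x = 0 ->
  [/\ x idx_m1 0 = 0, invform x 0 = 0 &
      forall u, ~~ odd #|J :&: porbit tau u| -> tsum (lcoord x) #|porbit tau u| u = 0].
Proof.
move=> Nx; have m_gt0 := double_order_gt0.
have mulrn_m_eq0 (z : int) : z *+ m = 0 -> z = 0.
  by move/eqP; rewrite mulrn_eq0 eqn0Ngt m_gt0 => /eqP.
have x_m1 : x idx_m1 0 = 0 by apply: mulrn_m_eq0; rewrite -normmx_Phi_m1 Nx mxE.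
split=> // [|u even_u]; apply: mulrn_m_eq0.
  rewrite -invform_normmx_Phi Nx /invform mxE big1 ?mulr0 ?addr0 // => v _.
  by rewrite mxE.
have iter_m : iter m tau u = u by rewrite -addnn iterD !iter_order_perm.
rewrite -tsum_periodic ?iter_porbit ?flips_porbit // mulnC.
by rewrite tsum_periodic ?flips_double_order // -normmx_Phi_l // Nx mxE mul0rn.
Qed.

Lemma coboundary_of_cycle_sums (x : 'cV[int]_(n.+2)) (b : int) :
  x idx_m1 0 = 0 -> invform x 0 = 0 ->
  (forall u, ~~ odd #|J :&: porbit tau u| -> tsum (lcoord x) #|porbit tau u| u = 0) ->
  (forall u, odd #|J :&: porbit tau u| -> (2 %| tsum (lcoord x) #|porbit tau u| u + b)%Z) ->
  exists y, x = P *m y - y.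
Proof.
move=> x_m1 x_inv x_even x_odd.
pose x' v := lcoord x v + b * (v \in J)%:Z.
have [yy yyE] : exists yy, forall u, yy u = (-1) ^+ (u \in J) * yy (tau u) - x' u.
  apply: twisted_coboundary => u Ju; rewrite tsum_shift flips_porbit.
    by rewrite (negPf Ju) mulr0 addr0 x_even.
  by rewrite Ju mulr1 x_odd.
pose y : 'cV[int]_(n.+2) := \col_i match @split 2 n i with inl _ => b | inr u => yy u end.
have y_m1 : y idx_m1 0 = b by rewrite mxE split_m1.
have y_l v : y (idx_l v) 0 = yy v by rewrite mxE split_l.
exists y; apply: Pic_mx_ext => [j|u j|j]; rewrite (ord1 j).
- by rewrite mxBE mulPmx_m1 subrr x_m1.
- by rewrite mxBE mulPmx_l !y_l y_m1 (yyE u) /x' /lcoord; ring.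
- by rewrite (invformB (P *m y) y) invform_mulPmx // subrr x_inv.
Qed.

Definition res (x : 'cV[int]_(n.+2)) (C : {set 'I_n}) : 'F_2 := \sum_(v in C) (lcoord x v)%:~R.

Definition odd_cycles := [set C in porbits tau | odd #|J :&: C|].

Lemma odd_cyclesP C :
  reflect (exists2 u, C = porbit tau u & odd #|J :&: porbit tau u|) (C \in odd_cycles).
Proof.
apply: (iffP idP) => [|[u -> odd_u]]; last by rewrite inE imset_f.
by rewrite inE => /andP[/imsetP[u _ ->] odd_u]; exists u.
Qed.

Lemma odd_cycles_even : ~~ odd #|odd_cycles|.
Proof.
rewrite -odd_sumn (eq_bigr _ (fun C _ => card_setI_sum J C)) -big_porbits.
by have := J_even; rewrite -sum1_card big_mkcond.
Qed.

Lemma res_porbit x u : res x (porbit tau u) = (tsum (lcoord x) #|porbit tau u| u)%:~R.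
Proof. by rewrite tsum_F2. Qed.

Lemma res_coboundary (y : 'cV[int]_(n.+2)) C :
  C \in odd_cycles -> res (P *m y - y) C = (y idx_m1 0)%:~R.
Proof.
case/odd_cyclesP => u -> odd_u.
have res_v v : (lcoord (P *m y - y) v)%:~R = (lcoord y (tau v))%:~R
    - (v \in J)%:R * (y idx_m1 0)%:~R - (lcoord y v)%:~R :> 'F_2.
  rewrite /lcoord mxBE mulPmx_l !rmorphB /= !rmorphM /= rmorph_sign.
  by rewrite oppr_pchar2 ?pchar_F2 // expr1n mul1r -natz mulrz_nat.
rewrite /res (eq_bigr _ (fun v _ => res_v v)) !sumrB.
rewrite (big_porbit_perm tau +%R (fun v => (lcoord y v)%:~R : 'F_2)) -mulr_suml -natr_sum.
by rewrite -card_setI_sum natr_F2 odd_u mul1r addrAC subrr add0r oppr_pchar2 ?pchar_F2.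
Qed.

Lemma res_sum_norm0 x : N *m x = 0 -> \sum_(C in odd_cycles) res x C = 0.
Proof.
case/norm0_coords => _ x_inv x_even.
have res_all : \sum_(C in porbits tau) res x C = 0.
  rewrite /res -big_porbits; move/(congr1 (fun z : int => z%:~R : 'F_2)): x_inv.
  by rewrite /invform rmorphD rmorphM rmorph_sum /= intr2_F2 mul0r add0r.
move: res_all; rewrite (bigID (fun C => odd #|J :&: C|)) /= [X in _ + X]big1 ?addr0.
  by move=> e; rewrite -[RHS]e; apply: eq_bigl => C; rewrite inE.
by move=> _ /andP[/imsetP[u _ ->] /x_even even_u]; rewrite res_porbit even_u.
Qed.

Lemma norm0_coboundaryP x : N *m x = 0 ->
  (exists y, x = P *m y - y) <-> exists a, forall C, C \in odd_cycles -> res x C = a.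
Proof.
move=> Nx; split=> [[y ->]|[a res_a]].
  by exists (y idx_m1 0)%:~R => C; apply: res_coboundary.
have [x_m1 x_inv x_even] := norm0_coords Nx.
apply: (coboundary_of_cycle_sums (b := (a != 0)%:Z)) => // u odd_u.
have odd_cycle_u : porbit tau u \in odd_cycles by apply/odd_cyclesP; exists u.
rewrite (dvdz_pcharf pchar_F2) rmorphD /= -res_porbit res_a //.
by rewrite -natz mulrz_nat -F2_nat_eq addrr_pchar2 ?pchar_F2.
Qed.

Local Notation L := #|odd_cycles|.

Definition cycle_at j := nth set0 (enum odd_cycles) j.

Lemma cycle_at_odd j : (j < L)%N -> cycle_at j \in odd_cycles.
Proof. by move=> lt_j; rewrite -mem_enum mem_nth // -cardE. Qed.

Lemma cycle_at_eq j k : (j < L)%N -> (k < L)%N -> (cycle_at j == cycle_at k) = (j == k).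
Proof. by move=> lt_j lt_k; rewrite nth_uniq ?enum_uniq // -cardE. Qed.

Lemma cycle_atP C : C \in odd_cycles -> exists2 j, (j < L)%N & C = cycle_at j.
Proof.
rewrite -mem_enum => C_odd; exists (index C (enum odd_cycles)).
  by rewrite cardE index_mem.
by rewrite /cycle_at nth_index.
Qed.

Lemma sum_odd_cycles (F : {set 'I_n} -> 'F_2) :
  \sum_(C in odd_cycles) F C = \sum_(j < L) F (cycle_at j).
Proof. by rewrite -big_enum (big_nth set0) cardE big_mkord. Qed.

(* Compares the first L - 2 residues with the last one; on ker N, where the
   residues sum to 0 and L is even, it vanishes iff all residues agree. *)
Definition res_row x : 'rV['F_2]_(L - 2) :=
  \row_(j < L - 2) (res x (cycle_at j) + res x (cycle_at L.-1)).

Lemma resB x y C : res (x - y) C = res x C - res y C.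
Proof. by rewrite /res -sumrB; apply: eq_bigr => v _; rewrite /lcoord mxBE rmorphB. Qed.

Lemma resD x y C : res (x + y) C = res x C + res y C.
Proof. by rewrite /res -big_split; apply: eq_bigr => v _; rewrite /lcoord mxE rmorphD. Qed.

Lemma res_rowD : {morph res_row : x y / x + y}.
Proof. by move=> x y; apply/rowP => j; rewrite !mxE !resD addrACA. Qed.

Lemma res_row_eq0P x : N *m x = 0 ->
  res_row x = 0 <-> exists a, forall C, C \in odd_cycles -> res x C = a.
Proof.
move=> Nx; split=> [row0|[a res_a]]; last first.
  apply/rowP => j; have lt_j := ltn_ord j.
  have [odd_j odd_last] : cycle_at j \in odd_cycles /\ cycle_at L.-1 \in odd_cycles.
    by split; apply: cycle_at_odd; lia.
  by rewrite !mxE !res_a // addrr_pchar2 ?pchar_F2.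
exists (res x (cycle_at L.-1)) => _ /cycle_atP[j lt_j ->].
apply: (F2_const_of_sum0 (c := fun j => res x (cycle_at j))) => //.
- exact: odd_cycles_even.
- by rewrite -sum_odd_cycles res_sum_norm0.
- move=> k lt_k; have /rowP/(_ (Ordinal lt_k)) := row0; rewrite !mxE.
  by move/eqP; rewrite addr_eq0 oppr_pchar2 ?pchar_F2 // => /eqP.
Qed.

Definition cycle_vec (C : {set 'I_n}) : 'cV[int]_(n.+2) :=
  if [pick v in C] is Some r then delta_mx (idx_l r) 0 else 0.

Lemma cycle_vecE C :
  C \in odd_cycles -> exists2 r, cycle_vec C = delta_mx (idx_l r) 0 & C = porbit tau r.
Proof.
case/odd_cyclesP => u -> _; rewrite /cycle_vec; case: pickP => [r r_u|/(_ u)].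
  by exists r => //; apply/eqP; rewrite eq_sym eq_porbit_mem.
by rewrite porbit_id.
Qed.

Lemma lcoord_delta r v : lcoord (delta_mx (idx_l r) 0) v = (v == r)%:R.
Proof. by rewrite /lcoord mxE (inj_eq (@idx_l_inj n)) eqxx andbT. Qed.

Lemma res_cycle_vec C C' :
  C \in odd_cycles -> C' \in odd_cycles -> res (cycle_vec C) C' = (C == C')%:R.
Proof.
move=> /cycle_vecE[r -> ->] /odd_cyclesP[u -> _].
rewrite /res (eq_bigr _ (fun v _ => congr1 intr (lcoord_delta r v))).
by under eq_bigr do rewrite rmorph_nat; rewrite sum_pred1_natr eq_porbit_mem.
Qed.

Lemma cycle_vec_coboundary C :
  C \in odd_cycles -> exists y, 2 *: cycle_vec C - delta_mx idx_0 0 = P *m y - y.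
Proof.
move=> C_odd; have [r -> eC] := cycle_vecE C_odd.
have odd_r : odd #|J :&: porbit tau r| by move: C_odd; rewrite eC inE => /andP[].
set x := _ - _.
have x_l v : lcoord x v = 2 * (v == r)%:R.
  by rewrite /lcoord mxBE !mxE (inj_eq (@idx_l_inj n)) -val_eqE /= eqxx andbT subr0.
have x_m1 : x idx_m1 0 = 0 by rewrite mxBE !mxE.
have x_inv : invform x 0 = 0.
  rewrite /invform (eq_bigr _ (fun v _ => x_l v)) -mulr_sumr sum_pred1_natr.
  by rewrite mxBE !mxE -val_eqE /=; lia.
apply: (coboundary_of_cycle_sums (b := 0)) => // u Ju.
  apply: big1 => i _; rewrite x_l; case: eqP => [ui_r|_]; last by rewrite !mulr0.
  by move: odd_r; rewrite -ui_r -permX porbit_perm (negPf Ju).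
rewrite addr0 (dvdz_pcharf pchar_F2) -res_porbit /res big1 // => v _.
by rewrite x_l rmorphM /= intr2_F2 mul0r.
Qed.

Lemma norm0_cycle_vecB C C' :
  C \in odd_cycles -> C' \in odd_cycles -> N *m (cycle_vec C - cycle_vec C') = 0.
Proof.
move=> /cycle_vec_coboundary[y ey] /cycle_vec_coboundary[y' ey'].
apply: (norm0_of_scaled_coboundary (Phi_order tau J_even) (_ : 2 != 0) (y := y - y')) => //.
have -> : 2 *: (cycle_vec C - cycle_vec C')
    = (2 *: cycle_vec C - delta_mx idx_0 0) - (2 *: cycle_vec C' - delta_mx idx_0 0).
  by rewrite opprB addrA subrK scalerBr.
by rewrite ey ey' mulmxBr !opprD !opprK addrACA.
Qed.

Lemma res_row0 : res_row 0 = 0.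
Proof. by apply/rowP => j; rewrite !mxE /res !big1 ?addr0 // => v _; rewrite /lcoord mxE. Qed.

Lemma res_row_cycle_vecB (j : 'I_(L - 2)) :
  res_row (cycle_vec (cycle_at j) - cycle_vec (cycle_at (L - 2))) = delta_mx 0 j.
Proof.
apply/rowP => k; have lt_j := ltn_ord j; have lt_k := ltn_ord k.
have [? ? ? ?] : [/\ cycle_at j \in odd_cycles, cycle_at k \in odd_cycles,
                   cycle_at (L - 2) \in odd_cycles & cycle_at L.-1 \in odd_cycles].
  by split; apply: cycle_at_odd; lia.
rewrite !mxE !resB !res_cycle_vec // !cycle_at_eq; try lia.
have [-> -> ->] : [/\ (L - 2 == k)%N = false, (j == L.-1 :> nat) = false
                   & (L - 2 == L.-1)%N = false] by split; apply/eqP; lia.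
by rewrite subr0 subrr !addr0 eqxx eq_sym.
Qed.

Lemma res_row_onto w : exists2 x, N *m x = 0 & res_row x = w.
Proof.
exists (\sum_(j < L - 2 | w 0 j != 0) (cycle_vec (cycle_at j) - cycle_vec (cycle_at (L - 2)))).
  rewrite mulmx_sumr big1 // => j _; have lt_j := ltn_ord j.
  by apply: norm0_cycle_vecB; apply: cycle_at_odd; lia.
rewrite (big_morph res_row res_rowD res_row0).
rewrite (eq_bigr _ (fun j _ => res_row_cycle_vecB j)).
apply/rowP => k; rewrite summxE big_mkcond (bigD1 k) //= big1 => [|j /negPf j_k]; last first.
  by rewrite mxE [k == _]eq_sym j_k andbF if_same.
by rewrite mxE !eqxx addr0 {2}[w 0 k]F2_nat_eq; case: (_ != 0).
Qed.
End PhiCohomology.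

Theorem proposition4p1 (n : nat) (J : {set 'I_n}) (tau : 'S_n)
  (hD : ~~ odd #|J|) :
  H1_iso_F2pow (Phi_mat J tau)
    (if (Lambda J tau == 0%N) || (Lambda J tau == 2%N) then 0%N
     else (Lambda J tau - 2)%N).
Proof.
have -> : (if (Lambda J tau == 0%N) || (Lambda J tau == 2%N) then 0%N
           else (Lambda J tau - 2)%N) = (#|odd_cycles J tau| - 2)%N.
  by have := odd_cycles_even tau hD; rewrite /Lambda; case: #|_| => [|[|[|k]]].
apply: (H1_iso_F2pow_cyclic (double_order_gt0 tau) (Phi_order tau hD) (@res_rowD _ J tau)).
  exact: res_row_onto.
by move=> x Nx; rewrite res_row_eq0P // norm0_coboundaryP.
Qed.
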